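(* Let $S$ be a non-empty finite reverse-factor-free set of strings of total length $n$, and let $k_{\min}$ be the length of a shortest string that contains, for every $s\in S$, $s$ or $s^R$ as a factor. Let $w$ be an output of the algorithm Greedy-R on $S$ (for any way of breaking ties). Then $$n-|w|\;\ge\;\tfrac12\,(n-k_{\min}),$$ i.e., Greedy-R has compression ratio $\tfrac12$.
   Context: For strings $x,y$, $\mathit{ov}(x,y)$ is the length of the longest suffix of $x$ that is also a prefix of $y$; $\mathrm{pref}(x,y)$ is $x$ with its suffix of length $\mathit{ov}(x,y)$ removed, and $x\otimes y=\mathrm{pref}(x,y)\,y$. $x^R$ denotes the reversal of $x$. For a set $X$ of strings, $X^R=\{x^R: x\in X\}$ and $\widetilde{X}=X\cup X^R$. A set $X$ is reverse-factor-free if there are no distinct $x,y\in X$ such that $x$ is a factor of $y$ or of $y^R$. The procedure Make-Reverse-Factor-Free$(X)$ repeatedly removes from the current set a string $x$ for which some other string $y\neq x$ of the current set has $x$ as a factor of $y$ or of $y^R$, until no such string remains (on a reverse-factor-free set it does nothing). Algorithm Greedy-R$(S)$: first set $S:=$ Make-Reverse-Factor-Free$(S)$. Then, while $|S|>1$: among all pairs $(u,v)$ with $u,v\in\widetilde{S}$ and $u\notin\{v,v^R\}$, choose one with maximal $\mathit{ov}(u,v)$ (ties broken arbitrarily); set $S:=S\cup\{u\otimes v\}$ and then remove from $S$ all of $u,v,u^R,v^R$ that belong to $S$. Return the only element of $S$. *)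

From mathcomp Require Import all_boot all_order all_algebra.
Set Implicit Arguments. Unset Strict Implicit. Unset Printing Implicit Defensive.

Section Strings.
Variable T : eqType.
Implicit Types (x y u v : seq T) (S : seq (seq T)).

(* ov x y : length of the longest suffix of x that is also a prefix of y
   (the suffix may be all of x). *)
Definition ov x y : nat :=
  \max_(k < (size x).+1 | prefix (drop (size x - k) x) y) k.

Definition pref x y : seq T := take (size x - ov x y) x.

Definition merge x y : seq T := pref x y ++ y.

(* A finite set of strings is represented by a duplicate-free list;
   S~ = S u S^R. *)
Definition tilde S : seq (seq T) := S ++ map rev S.

Definition rff S : Prop :=
  forall x y, x \in S -> y \in S -> x != y -> ~~ infix x y && ~~ infix x (rev y).

Definition total_length S : nat := \sum_(s <- S) size s.

Definition rsuperstring S w : Prop :=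
  forall s, s \in S -> infix s w || infix (rev s) w.

Definition is_kmin S k : Prop :=
  (exists w, rsuperstring S w /\ size w = k) /\
  (forall w, rsuperstring S w -> k <= size w).

Definition removable S x : Prop :=
  x \in S /\ exists y, [/\ y \in S, y != x & infix x y || infix x (rev y)].

Definition mrff_step S S' : Prop :=
  exists x, removable S x /\ uniq S' /\ S' =i [pred z | (z \in S) && (z != x)].

Inductive mrff : seq (seq T) -> seq (seq T) -> Prop :=
| mrff_stop S : (forall x, ~ removable S x) -> mrff S S
| mrff_more S S' S'' : mrff_step S S' -> mrff S' S'' -> mrff S S''.

Definition admissible S u v : Prop :=
  [/\ u \in tilde S, v \in tilde S, u != v & u != rev v].

(* One iteration of the while loop of Greedy-R, with arbitrary tie-breaking. *)
Definition greedy_step S S' : Prop :=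
  exists u v, [/\ admissible S u v,
    (forall u' v', admissible S u' v' -> ov u' v' <= ov u v),
    uniq S' &
    S' =i [pred z | ((z \in S) || (z == merge u v)) &&
                    (z \notin [:: u; v; rev u; rev v])]].

Inductive greedy_loop : seq (seq T) -> seq T -> Prop :=
| gl_done w : greedy_loop [:: w] w
| gl_step S S' w : 1 < size S -> greedy_step S S' -> greedy_loop S' w ->
                   greedy_loop S w.

Definition greedyR_output S w : Prop :=
  exists S0, mrff S S0 /\ greedy_loop S0 w.

End Strings.

(* Weigh a tour of a set of strings (each string listed once, in one of its
   two orientations) by the sum of the overlaps of consecutive strings.
   Listing the strings in the order of their leftmost occurrences in a
   shortest superstring gives a tour of weight at least n - k_min.  When
   Greedy-R merges u and v with maximal overlap k, the total length drops by
   exactly k, and any tour of the old set can be rerouted through u (x) v,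
   reversing the segment between u and v if their orientations disagree,
   losing at most 2k of weight: every cut link at u or v weighs at most k,
   and where two cut links are replaced by one, the Monge inequality
   ov a d + ov c b <= ov a b + ov c d bounds the loss.  The final set {w}
   only has tours of weight 0, so 2 (n - |w|) is at least the weight of the
   first tour. *)

From Pilot Require Import Defs.
From mathcomp Require Import all_boot all_order all_algebra zify ring lra.
Set Implicit Arguments. Unset Strict Implicit. Unset Printing Implicit Defensive.
Local Notation merge := Defs.merge.

Section Overlaps.
Variable A : eqType.
Implicit Types (a b c d m o p q r s x y u v : seq A).

Lemma ninfix_neq x y : ~~ infix x y -> x != y.
Proof. by apply: contra => /eqP ->; rewrite infix_refl. Qed.

Lemma eq_revLR x y : (x == rev y) = (rev x == y).
Proof. by apply/eqP/eqP => [->|<-]; rewrite revK. Qed.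

Lemma ov_split x y :
  exists x1 o y1, [/\ x = x1 ++ o, y = o ++ y1 & size o = ov x y].
Proof.
rewrite /ov.
have P0 : (fun k : 'I_(size x).+1 => prefix (drop (size x - k) x) y) ord0.
  by rewrite /= subn0 drop_size prefix0s.
rewrite (bigmax_eq_arg ord0 P0).
case: arg_maxnP => //= i Pi _.
case/prefixP: Pi => y1 Ey.
exists (take (size x - i) x), (drop (size x - i) x), y1; split => //.
  by rewrite cat_take_drop.
by rewrite size_drop; have := ltn_ord i; lia.
Qed.

Lemma leq_size_ov x y x1 o y1 : x = x1 ++ o -> y = o ++ y1 -> size o <= ov x y.
Proof.
move=> Ex Ey; rewrite /ov.
have lt_o : size o < (size x).+1 by rewrite Ex size_cat; lia.
apply: leq_trans (leq_bigmax_cond (Ordinal lt_o) _) => //=.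
rewrite Ex drop_cat size_cat.
have -> : size x1 + size o - size o = size x1 by lia.
by rewrite ltnn subnn drop0 Ey prefix_prefix.
Qed.

Lemma ov_leq_sizer x y : ov x y <= size y.
Proof. by have [x1 [o [y1 [_ -> <-]]]] := ov_split x y; rewrite size_cat leq_addr. Qed.

Lemma ov_rev x y : ov (rev y) (rev x) = ov x y.
Proof.
apply/eqP; rewrite eqn_leq; apply/andP; split.
  have [y1 [o [x1 [Ey Ex <-]]]] := ov_split (rev y) (rev x).
  rewrite -size_rev; apply: (@leq_size_ov _ _ (rev x1) _ (rev y1)).
    by rewrite -rev_cat -Ex revK.
  by rewrite -rev_cat -Ey revK.
have [x1 [o [y1 [Ex Ey <-]]]] := ov_split x y.
rewrite -size_rev; apply: (@leq_size_ov _ _ (rev y1) _ (rev x1)).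
  by rewrite Ey rev_cat.
by rewrite Ex rev_cat.
Qed.

Lemma merge_split u v : exists u1 o v1,
  [/\ u = u1 ++ o, v = o ++ v1, size o = ov u v & merge u v = u1 ++ o ++ v1].
Proof.
have [u1 [o [v1 [Eu Ev So]]]] := ov_split u v.
exists u1, o, v1; split => //.
by rewrite /merge /pref -So Eu size_cat addnK take_size_cat // Ev.
Qed.

Lemma size_merge u v : size (merge u v) = size u + size v - ov u v.
Proof.
have [u1 [o [v1 [Eu Ev So ->]]]] := merge_split u v.
by rewrite -So Eu Ev !size_cat; lia.
Qed.

Lemma merge_prefix u v : exists v1, merge u v = u ++ v1.
Proof. by have [u1 [o [v1 [-> _ _ ->]]]] := merge_split u v; exists v1; rewrite catA. Qed.

Lemma merge_suffix u v : exists u1, merge u v = u1 ++ v.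
Proof. by have [u1 [o [v1 [_ -> _ ->]]]] := merge_split u v; exists u1. Qed.

Lemma infix_merge_l u v : infix u (merge u v).
Proof. by have [v1 ->] := merge_prefix u v; apply: prefix_infix. Qed.

Lemma infix_merge_r u v : infix v (merge u v).
Proof. by have [u1 ->] := merge_suffix u v; apply: suffix_infix. Qed.

Lemma rev_merge u v : rev (merge u v) = merge (rev v) (rev u).
Proof.
have [u1 [o [v1 [Eu Ev So ->]]]] := merge_split u v.
have [v2 [o' [u2 [Ev' Eu' So' ->]]]] := merge_split (rev v) (rev u).
rewrite ov_rev -So in So'.
have E : rev v1 ++ rev o = v2 ++ o' by rewrite -Ev' Ev rev_cat.
move/eqP: (E); rewrite eqseq_cat;
  last by move/(congr1 size): E; rewrite !size_cat !size_rev; lia.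
case/andP=> /eqP <- /eqP Eo; subst o'.
have /eqP : rev o ++ rev u1 = rev o ++ u2 by rewrite -Eu' Eu rev_cat.
rewrite eqseq_cat // => /andP[_ /eqP <-].
by rewrite !rev_cat catA.
Qed.

Lemma eq_cat_leq p q r s : p ++ q = r ++ s -> size p <= size r ->
  exists m, r = p ++ m /\ q = m ++ s.
Proof.
move=> E le_pr; exists (drop (size p) r).
have Ep : take (size p) r = p.
  have Etake := congr1 (take (size p)) E; rewrite take_size_cat // in Etake.
  rewrite {2}Etake take_cat; case: ltnP => h //.
  have -> : size p = size r by apply/eqP; rewrite eqn_leq le_pr h.
  by rewrite subnn take0 cats0 take_size.
split; first by rewrite -{1}(cat_take_drop (size p) r) Ep.
have : p ++ q = p ++ (drop (size p) r ++ s) by rewrite E catA -{1}Ep cat_take_drop.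
by move/eqP; rewrite eqseq_cat // eqxx /= => /eqP.
Qed.

Lemma ov_catl m v x : ~~ infix v x -> ov (m ++ v) x = ov v x.
Proof.
move=> nvx; apply/eqP; rewrite eqn_leq; apply/andP; split.
  have [x1 [o [y1 [E1 E2 <-]]]] := ov_split (m ++ v) x.
  have size_E1 := congr1 size E1; rewrite !size_cat in size_E1.
  case: (leqP (size v) (size o)) => h.
    have le_x1m : size x1 <= size m by lia.
    have [m' [_ Eo]] := eq_cat_leq (esym E1) le_x1m.
    by case/negP: nvx; rewrite E2 Eo -catA infix_infix.
  have le_mx1 : size m <= size x1 by lia.
  have [m' [_ Eo]] := eq_cat_leq E1 le_mx1.
  exact: leq_size_ov Eo E2.
have [x1 [o [y1 [E1 E2 <-]]]] := ov_split v x.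
by apply: (@leq_size_ov _ _ (m ++ x1)) E2; rewrite E1 catA.
Qed.

Lemma ov_catr u m x : ~~ infix u x -> ov x (u ++ m) = ov x u.
Proof.
by move=> nux; rewrite -ov_rev rev_cat ov_catl ?ov_rev // infix_rev.
Qed.

Lemma ov_merge_l y u v : ~~ infix u y -> ov y (merge u v) = ov y u.
Proof. by have [v1 ->] := merge_prefix u v; apply: ov_catr. Qed.

Lemma ov_merge_r y u v : ~~ infix v y -> ov (merge u v) y = ov v y.
Proof. by have [u1 ->] := merge_suffix u v; apply: ov_catl. Qed.

(* Both short overlaps lie inside the overlap of a and b; if they do not fit
   side by side there, their intersection is an overlap of c with d. *)
Lemma ov_monge a b c d : ov a d <= ov a b -> ov c b <= ov a b ->
  ov a d + ov c b <= ov a b + ov c d.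
Proof.
have [a1 [o [b1 [Ea Eb <-]]]] := ov_split a b.
have [a2 [p [d1 [Ea2 Ed <-]]]] := ov_split a d.
have [c1 [q [b2 [Ec Eb2 <-]]]] := ov_split c b.
move=> le_p le_q.
case: (leqP (size p + size q) (size o)) => h; first lia.
have E1 : a1 ++ o = a2 ++ p by rewrite -Ea Ea2.
have size_E1 := congr1 size E1; rewrite !size_cat in size_E1.
have le_a1a2 : size a1 <= size a2 by lia.
have [o1 [_ Eo]] := eq_cat_leq E1 le_a1a2.
have E2 : q ++ b2 = o ++ b1 by rewrite -Eb Eb2.
have [o2 [Eo' _]] := eq_cat_leq E2 le_q.
have E3 : o1 ++ p = q ++ o2 by rewrite -Eo Eo'.
have size_Eo := congr1 size Eo; rewrite size_cat in size_Eo.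
have le_o1q : size o1 <= size q by lia.
have [r [Eq Ep]] := eq_cat_leq E3 le_o1q.
have : size r <= ov c d.
  by apply: (@leq_size_ov _ _ (c1 ++ o1) _ (o2 ++ d1)); rewrite ?Ec ?Ed ?Eq ?Ep catA.
by have := congr1 size Eq; rewrite size_cat; lia.
Qed.

Lemma infix_merge_ov u v x : infix x (merge u v) -> ~~ infix x u -> ~~ infix x v ->
  ov u v < ov u x.
Proof.
have [u1 [o [v1 [Eu Ev So ->]]]] := merge_split u v.
case/infixP => p [s E] nxu nxv.
case: (leqP (size u1) (size p)) => h1.
  have [m [_ Eo]] := eq_cat_leq E h1.
  by case/negP: nxv; rewrite Ev Eo infix_infix.
have le_pu1 : size p <= size u1 by lia.
have [m [Eu1 Ex]] := eq_cat_leq (esym E) le_pu1.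
have m_gt0 : size m > 0 by have := congr1 size Eu1; rewrite size_cat; lia.
have Ex' : x ++ s = (m ++ o) ++ v1 by rewrite Ex catA.
case: (leqP (size x) (size (m ++ o))) => h2.
  have [m2 [Emo _]] := eq_cat_leq Ex' h2.
  by case/negP: nxu; rewrite Eu Eu1 -catA Emo infix_infix.
have le_mox : size (m ++ o) <= size x by lia.
have [m3 [Ex3 _]] := eq_cat_leq (esym Ex') le_mox.
have : size (m ++ o) <= ov u x by apply: (@leq_size_ov _ _ p _ m3); rewrite // Eu Eu1 catA.
by rewrite -So size_cat; lia.
Qed.

End Overlaps.

Section Tours.
Variable A : eqType.
Implicit Types (x y : seq A) (X Y Z : seq (seq A)).

Fixpoint tour_ov X : nat :=
  if X is x :: X' then (if X' is y :: _ then ov x y + tour_ov X' else 0) else 0.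

Definition link_ov X Y : nat :=
  if X is x :: X' then (if Y is y :: _ then ov (last x X') y else 0) else 0.

Definition rev_tour X := map rev (rev X).

Lemma tour_ov1 x : tour_ov [:: x] = 0.
Proof. by []. Qed.

Lemma tour_ov_cat X Y : tour_ov (X ++ Y) = tour_ov X + link_ov X Y + tour_ov Y.
Proof.
elim: X => [|x [|x' X] IH] //=; first by case: (Y).
by move: IH; rewrite [tour_ov ((x' :: X) ++ Y)]/= => ->/=; lia.
Qed.

Lemma tour_ov_cons x Y : tour_ov (x :: Y) = link_ov [:: x] Y + tour_ov Y.
Proof. by rewrite -cat1s tour_ov_cat. Qed.

Lemma leq_tour_ov_cat X Y : tour_ov X + tour_ov Y <= tour_ov (X ++ Y).
Proof. by rewrite tour_ov_cat; lia. Qed.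

Lemma link_ov11 x y : link_ov [:: x] [:: y] = ov x y.
Proof. by []. Qed.

Lemma link_ov0r X : link_ov X [::] = 0.
Proof. by case: X. Qed.

Lemma link_ov_consr X y Z : link_ov X (y :: Z) = link_ov X [:: y].
Proof. by case: X. Qed.

Lemma link_ov_catr X Y Z : Y != [::] -> link_ov X (Y ++ Z) = link_ov X Y.
Proof. by case: Y => // y Y _; rewrite cat_cons link_ov_consr [RHS]link_ov_consr. Qed.

Lemma link_ov_rconsl X y Z : link_ov (rcons X y) Z = link_ov [:: y] Z.
Proof. by case: X => [|x X] //=; rewrite last_rcons. Qed.

Lemma link_ov_catl X Y Z : Y != [::] -> link_ov (X ++ Y) Z = link_ov Y Z.
Proof. by case/lastP: Y => // Y y _; rewrite -rcons_cat !link_ov_rconsl. Qed.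

Lemma rev_tour_cons x X : rev_tour (x :: X) = rev_tour X ++ [:: rev x].
Proof. by rewrite /rev_tour rev_cons map_rcons cats1. Qed.

Lemma rev_tour_cat X Y : rev_tour (X ++ Y) = rev_tour Y ++ rev_tour X.
Proof. by rewrite /rev_tour rev_cat map_cat. Qed.

Lemma rev_tourK : involutive (@rev_tour).
Proof.
by move=> X; rewrite /rev_tour -map_rev revK -map_comp (eq_map (@revK A)) map_id.
Qed.

Lemma rev_tour_eq0 X : (rev_tour X == [::]) = (X == [::]).
Proof. by rewrite -!size_eq0 size_map size_rev. Qed.

Lemma mem_rev_tour X y : (y \in rev_tour X) = (rev y \in X).
Proof. by rewrite /rev_tour -{1}(revK y) (mem_map (can_inj (@revK A))) mem_rev. Qed.

Lemma link_ov_rev_tour X Y : link_ov (rev_tour Y) (rev_tour X) = link_ov X Y.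
Proof.
case/lastP: X => [|X x]; first by rewrite /rev_tour /= link_ov0r.
case: Y => [|y Y]; first by rewrite link_ov0r.
rewrite rev_tour_cons link_ov_catl // /rev_tour rev_rcons /= link_ov_consr.
by rewrite link_ov_rconsl ov_rev.
Qed.

Lemma tour_ov_rev_tour X : tour_ov (rev_tour X) = tour_ov X.
Proof.
elim: X => [|x X IH] //.
rewrite rev_tour_cons tour_ov_cat IH (tour_ov_cons x) addn0.
by rewrite -[[:: rev x]]/(rev_tour [:: x]) link_ov_rev_tour addnC.
Qed.

Lemma eq_link_ovr X x x' : {in X, forall y, ov y x = ov y x'} ->
  link_ov X [:: x] = link_ov X [:: x'].
Proof. by case: X => [|z X] //= H; rewrite H // mem_last. Qed.

Lemma eq_link_ovl Y x x' : {in Y, forall y, ov x y = ov x' y} ->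
  link_ov [:: x] Y = link_ov [:: x'] Y.
Proof. by case: Y => [|z Y] //= H; rewrite H // mem_head. Qed.

Lemma link_ovr_leq X x k : {in X, forall y, ov y x <= k} -> link_ov X [:: x] <= k.
Proof. by case: X => [|z X] //= H; rewrite H // mem_last. Qed.

Lemma link_ovl_leq Y x k : {in Y, forall y, ov x y <= k} -> link_ov [:: x] Y <= k.
Proof. by case: Y => [|z Y] //= H; rewrite H // mem_head. Qed.

Lemma link_ov_monge X Y a b :
  link_ov X [:: b] <= ov a b -> link_ov [:: a] Y <= ov a b ->
  link_ov X [:: b] + link_ov [:: a] Y <= ov a b + link_ov X Y.
Proof.
case: X => [|x X]; first by case: Y => //= *; lia.
case: Y => [|y Y]; first by rewrite link_ov0r /=; lia.
by rewrite /= => h1 h2; rewrite addnC; apply: ov_monge.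
Qed.

End Tours.

Section Rearrangement.
Variables (A : eqType) (a b : seq A) (D : pred (seq A)).
Hypothesis D_rev : forall x, D x -> D (rev x).
Hypothesis ov_maximal :
  forall x y, D x -> D y -> x != y -> x != rev y -> ov x y <= ov a b.
Hypotheses (Da : D a) (Db : D b) (a_neq_b : a != b) (a_neq_revb : a != rev b).

Definition apart y :=
  [&& D y, ~~ infix a y, ~~ infix a (rev y), ~~ infix b y & ~~ infix b (rev y)].

Lemma apart_rev y : apart (rev y) = apart y.
Proof.
rewrite /apart revK; apply/and5P/and5P => -[Dy *]; split=> //.
  by rewrite -[y]revK D_rev.
exact: D_rev.
Qed.

Section Apart.
Variable y : seq A.
Hypothesis apart_y : apart y.

Lemma ov_a_apart : ov a y <= ov a b.
Proof. by case/and5P: apart_y => Dy nay nary _ _; apply: ov_maximal; rewrite ?ninfix_neq. Qed.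

Lemma ov_b_apart : ov b y <= ov a b.
Proof. by case/and5P: apart_y => Dy _ _ nby nbry; apply: ov_maximal; rewrite ?ninfix_neq. Qed.

Lemma ov_apart_b : ov y b <= ov a b.
Proof.
case/and5P: apart_y => Dy _ _ nby nbry; apply: ov_maximal => //.
  by rewrite eq_sym ninfix_neq.
by rewrite eq_revLR eq_sym ninfix_neq.
Qed.

Lemma ov_revb_apart : ov (rev b) y <= ov a b.
Proof.
case/and5P: apart_y => Dy _ _ nby nbry; apply: ov_maximal => //; first exact: D_rev.
  by rewrite -eq_revLR ninfix_neq.
by rewrite (can_eq (@revK A)) ninfix_neq.
Qed.

Lemma ov_apart_merge : ov y (merge a b) = ov y a.
Proof. by case/and5P: apart_y => _ nay _ _ _; apply: ov_merge_l. Qed.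

Lemma ov_merge_apart : ov (merge a b) y = ov b y.
Proof. by case/and5P: apart_y => _ _ _ nby _; apply: ov_merge_r. Qed.

End Apart.

Lemma ov_leq_ba : ov b a <= ov a b.
Proof. by apply: ov_maximal; rewrite // 1?eq_revLR eq_sym. Qed.

Lemma ov_leq_a_revb : ov a (rev b) <= ov a b.
Proof. by apply: ov_maximal; rewrite ?D_rev ?revK // eq_sym. Qed.

Lemma ninfix_merge x : D x -> ~~ infix x a -> ~~ infix x b -> a != x -> a != rev x ->
  ~~ infix x (merge a b).
Proof.
move=> Dx nxa nxb nax narx; apply/negP => /infix_merge_ov /(_ nxa nxb).
by rewrite ltnNge ov_maximal.
Qed.

Section Segments.
Variables P Q R : seq (seq A).
Hypotheses (apartP : {in P, forall y, apart y}) (apartQ : {in Q, forall y, apart y})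
  (apartR : {in R, forall y, apart y}).

Lemma tour_merge_ab :
  tour_ov (P ++ a :: Q ++ b :: R) <= tour_ov (P ++ merge a b :: R ++ Q) + 2 * ov a b.
Proof.
have -> : P ++ merge a b :: R ++ Q = (P ++ merge a b :: R) ++ Q by rewrite -catA.
apply: leq_trans (leq_add (leq_tour_ov_cat _ _) (leqnn _)).
rewrite !tour_ov_cat !tour_ov_cons !link_ov_consr.
rewrite (@eq_link_ovr _ _ (merge a b) a); last by move=> y /apartP /ov_apart_merge.
rewrite (@eq_link_ovl _ _ (merge a b) b); last by move=> y /apartR /ov_merge_apart.
have [->|Qn] := eqVneq Q [::]; first by case: (R) => [|r R'] /=; lia.
rewrite link_ov_catr // tour_ov_cat link_ov_consr tour_ov_cons.
have : link_ov [:: a] Q <= ov a b by apply: link_ovl_leq => y /apartQ /ov_a_apart.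
have : link_ov Q [:: b] <= ov a b by apply: link_ovr_leq => y /apartQ /ov_apart_b.
lia.
Qed.

(* By the Monge inequality, the links P|b and a|R are paid for by ov a b
   and the new link P|R. *)
Lemma tour_merge_ba :
  tour_ov (P ++ b :: Q ++ a :: R) <= tour_ov (P ++ R ++ Q ++ [:: merge a b]) + 2 * ov a b.
Proof.
rewrite catA; apply: leq_trans (leq_add (leq_tour_ov_cat _ _) (leqnn _)).
rewrite !tour_ov_cat tour_ov1 !tour_ov_cons link_ov_consr addn0.
rewrite (@eq_link_ovr _ _ (merge a b) a); last by move=> y /apartQ /ov_apart_merge.
have Pb : link_ov P [:: b] <= ov a b by apply: link_ovr_leq => y /apartP /ov_apart_b.
have aR : link_ov [:: a] R <= ov a b by apply: link_ovl_leq => y /apartR /ov_a_apart.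
have := link_ov_monge Pb aR.
have [->|Qn] := eqVneq Q [::].
  rewrite cat0s link_ov_consr link_ov11 tour_ov_cons [tour_ov [::]]/= [link_ov [::] _]/=.
  by have := ov_leq_ba; lia.
rewrite link_ov_catr // tour_ov_cat link_ov_consr tour_ov_cons.
have : link_ov [:: b] Q <= ov a b by apply: link_ovl_leq => y /apartQ /ov_b_apart.
lia.
Qed.

Lemma tour_merge_arevb :
  tour_ov (P ++ a :: Q ++ rev b :: R)
    <= tour_ov (P ++ merge a b :: rev_tour Q ++ R) + 2 * ov a b.
Proof.
rewrite !tour_ov_cat !tour_ov_cons !link_ov_consr.
rewrite (@eq_link_ovr _ _ (merge a b) a); last by move=> y /apartP /ov_apart_merge.
have QR := leq_tour_ov_cat (rev_tour Q) R; rewrite tour_ov_rev_tour in QR.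
have bR : link_ov [:: rev b] R <= ov a b by apply: link_ovl_leq => y /apartR /ov_revb_apart.
have [->|Qn] := eqVneq Q [::].
  rewrite cat0s link_ov_consr link_ov11 tour_ov_cons.
  rewrite (_ : rev_tour [::] = [::]) // cat0s.
  by have := ov_leq_a_revb; lia.
have -> : link_ov [:: merge a b] (rev_tour Q ++ R) = link_ov Q [:: rev b].
  rewrite link_ov_catr ?rev_tour_eq0 // (@eq_link_ovl _ _ _ b); last first.
    by move=> y; rewrite mem_rev_tour => /apartQ; rewrite apart_rev => /ov_merge_apart.
  by rewrite -[in LHS](revK b) -[[:: rev (rev b)]]/(rev_tour [:: rev b]) link_ov_rev_tour.
rewrite link_ov_catr // [tour_ov (Q ++ _)]tour_ov_cat tour_ov_cons link_ov_consr.
have : link_ov [:: a] Q <= ov a b by apply: link_ovl_leq => y /apartQ /ov_a_apart.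
lia.
Qed.

End Segments.

End Rearrangement.

Lemma apart_revC (A : eqType) (a b : seq A) (D : pred (seq A)) y :
  apart (rev b) (rev a) D y = apart a b D y.
Proof.
rewrite /apart !infix_revLR !revK.
by case: (D y) (infix a y) (infix a (rev y)) (infix b y) (infix b (rev y)) => [] [] [] [] [].
Qed.

Lemma in_apart_revC (A : eqType) (a b : seq A) (D : pred (seq A)) (Z : seq (seq A)) :
  {in Z, forall y, apart a b D y} -> {in Z, forall y, apart (rev b) (rev a) D y}.
Proof. by move=> apartZ y /apartZ; rewrite apart_revC. Qed.

Lemma in_apart_rev_tour (A : eqType) (a b : seq A) (D : pred (seq A)) (Z : seq (seq A)) :
  (forall x, D x -> D (rev x)) -> {in Z, forall y, apart a b D y} ->
  {in rev_tour Z, forall y, apart (rev b) (rev a) D y}.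
Proof.
by move=> D_rev apartZ y; rewrite mem_rev_tour apart_revC -(apart_rev a b D_rev) => /apartZ.
Qed.

Section All2.
Variables (T1 T2 : eqType) (r : T1 -> T2 -> bool).

Lemma all2_cons x y s t : all2 r (x :: s) (y :: t) = r x y && all2 r s t.
Proof. by []. Qed.

Lemma all2_cat s1 s2 t1 t2 : all2 r s1 t1 -> all2 r s2 t2 -> all2 r (s1 ++ s2) (t1 ++ t2).
Proof. by elim: s1 t1 => [|x s1 IH] [|y t1] //= /andP[-> /IH]. Qed.

Lemma all2_splitr s t1 y t2 : all2 r s (t1 ++ y :: t2) ->
  exists s1 x s2, [/\ s = s1 ++ x :: s2, all2 r s1 t1, r x y & all2 r s2 t2].
Proof.
elim: t1 s => [|y' t1 IH] [|x s] //= /andP[rxy].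
  by exists [::], x, s.
case/IH => [s1 [x' [s2 [-> ? ? ?]]]].
by exists (x :: s1), x', s2; rewrite /= rxy.
Qed.

Lemma all2_mem s t x : all2 r s t -> x \in s -> exists2 y, y \in t & r x y.
Proof.
elim: s t => [|x' s IH] [|y t] //= /andP[rxy /IH {}IH].
rewrite inE => /predU1P[->|/IH[y' y't rxy']]; first by exists y; rewrite ?mem_head.
by exists y'; rewrite // inE y't orbT.
Qed.

End All2.

Section Orientations.
Variable A : eqType.
Implicit Types (c s t x y z u v : seq A) (S X : seq (seq A)).

Lemma perm_total_length S S' : perm_eq S S' -> total_length S = total_length S'.
Proof. exact: perm_big. Qed.

Lemma total_length_cons s S : total_length (s :: S) = size s + total_length S.
Proof. exact: big_cons. Qed.

Definition orient t s := (t == s) || (t == rev s).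

Lemma orient_refl s : orient s s.
Proof. by rewrite /orient eqxx. Qed.

Lemma orient_revl t s : orient (rev t) s = orient t s.
Proof. by rewrite /orient eq_revLR revK -eq_revLR orbC. Qed.

Lemma orient_size t s : orient t s -> size t = size s.
Proof. by case/orP => /eqP ->; rewrite ?size_rev. Qed.

Lemma orient_trans x u s : orient x s -> orient u s -> orient x u.
Proof. by move=> /orP[]/eqP-> /orP[]/eqP->; rewrite /orient ?revK eqxx ?orbT. Qed.

Lemma mem_tilde_rev S x : (rev x \in tilde S) = (x \in tilde S).
Proof.
rewrite /tilde !mem_cat (mem_map (can_inj (@revK A))) orbC.
by congr orb; apply/idP/mapP => [?|[y ? ->]]; [exists (rev x); rewrite ?revK | rewrite revK].
Qed.

Lemma orient_tilde S s x : s \in S -> orient x s -> x \in tilde S.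
Proof. by move=> sS /orP[]/eqP->; rewrite mem_cat ?sS // map_f ?orbT. Qed.

Lemma tildeP S x : reflect (exists2 s, s \in S & orient x s) (x \in tilde S).
Proof.
apply: (iffP idP) => [|[s sS /(orient_tilde sS)] //].
rewrite mem_cat => /orP[xS|/mapP[s sS ->]]; first by exists x; rewrite ?orient_refl.
by exists s; rewrite // orient_revl orient_refl.
Qed.

Lemma rff_orient S s1 s2 c z : rff S -> s1 \in S -> s2 \in S -> s1 != s2 ->
  orient c s1 -> orient z s2 -> ~~ infix c z.
Proof.
move=> rff_S s1S s2S s12 /orP[]/eqP-> /orP[]/eqP->;
  have /andP[n1 n2] := rff_S _ _ s1S s2S s12 => //.
- by rewrite infix_revLR.
- by rewrite infix_rev.
Qed.

Lemma rff_sub S S' : rff S -> {subset S' <= S} -> rff S'.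
Proof. by move=> rff_S sub x y /sub xS /sub yS; apply: rff_S. Qed.

Definition tour_of S X := exists2 S0, all2 orient X S0 & perm_eq S0 S.

Lemma tour_of_perm S S' X : perm_eq S S' -> tour_of S X -> tour_of S' X.
Proof. by move=> pS [S0 XS0 pS0]; exists S0; last exact: perm_trans pS. Qed.

Lemma tour_of_cons S X s t : tour_of S X -> orient t s -> tour_of (s :: S) (t :: X).
Proof. by case=> S0 XS0 pS0 ts; exists (s :: S0); rewrite /= ?ts ?perm_cons. Qed.

Lemma tour_of_headP S t X : tour_of S (t :: X) -> exists2 s, s \in S & orient t s.
Proof.
by case=> [[|s S0] //= /andP[ts _] pS0]; exists s; rewrite // -(perm_mem pS0) mem_head.
Qed.

Lemma all2_orient_rev_tour X S0 : all2 orient X S0 -> all2 orient (rev_tour X) (rev S0).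
Proof.
elim: X S0 => [|x X IH] [|s S0] //= /andP[xs /IH XS0].
by rewrite rev_tour_cons rev_cons -cats1 all2_cat //= orient_revl xs.
Qed.

Lemma tour_split X S0 su sv : all2 orient X S0 -> su \in S0 -> sv \in S0 -> su != sv ->
  exists P x Q y R P0 Q0 R0,
    [/\ tour_ov (P ++ x :: Q ++ y :: R) = tour_ov X, orient x su, orient y sv,
        [/\ all2 orient P P0, all2 orient Q Q0 & all2 orient R R0] &
        perm_eq S0 (su :: sv :: P0 ++ Q0 ++ R0)].
Proof.
move=> XS0 suS0 svS0 nsuv.
case/splitPr: suS0 XS0 svS0 => S1 S2 /all2_splitr[P [x [X2 [-> PS1 xsu X2S2]]]].
rewrite mem_cat inE eq_sym (negbTE nsuv) /= => /orP[svS1|svS2].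
  case/splitPr: svS1 PS1 => S11 S12 /all2_splitr[P1 [y [P2 [-> P1S11 ysv P2S12]]]].
  exists (rev_tour X2), (rev x), (rev_tour P2), (rev y), (rev_tour P1),
    (rev S2), (rev S12), (rev S11).
  rewrite !orient_revl !all2_orient_rev_tour //; split => //.
    by rewrite -[RHS]tour_ov_rev_tour !(rev_tour_cat, rev_tour_cons) -!catA.
  by apply/permP => ?; rewrite /= !count_cat /= ?count_cat ?count_rev; ring.
case/splitPr: svS2 X2S2 => S21 S22 /all2_splitr[Q [y [R [-> QS21 ysv RS22]]]].
exists P, x, Q, y, R, S1, S21, S22; split => //.
by apply/permP => ?; rewrite /= !count_cat /= ?count_cat /=; ring.
Qed.

End Orientations.
Arguments orient {A}.

Lemma total_length_merge (A : eqType) (S rest : seq (seq A)) (u v su sv : seq A) :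
  orient u su -> orient v sv -> perm_eq S (su :: sv :: rest) ->
  total_length (merge u v :: rest) + ov u v = total_length S.
Proof.
move=> u_su v_sv perm_S.
rewrite (perm_total_length perm_S) !total_length_cons size_merge.
by rewrite -(orient_size u_su) -(orient_size v_sv); have := ov_leq_sizer u v; lia.
Qed.

Section GreedyStep.
Variables (A : eqType) (S : seq (seq A)) (u v : seq A).
Hypotheses (rff_S : rff S) (adm_uv : admissible S u v)
  (ov_uv_max : forall u' v', admissible S u' v' -> ov u' v' <= ov u v).

Let D : pred (seq A) := [pred x | x \in tilde S].

Let D_rev x : D x -> D (rev x).
Proof. by rewrite /D /= mem_tilde_rev. Qed.

Let Du : D u. Proof. by case: adm_uv. Qed.
Let Dv : D v. Proof. by case: adm_uv. Qed.
Let Drevu : D (rev u). Proof. exact: D_rev. Qed.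
Let Drevv : D (rev v). Proof. exact: D_rev. Qed.
Let u_neq_v : u != v. Proof. by case: adm_uv. Qed.
Let u_neq_revv : u != rev v. Proof. by case: adm_uv. Qed.
Let revv_neq_revu : rev v != rev u. Proof. by rewrite (can_eq (@revK A)) eq_sym. Qed.
Let revv_neq_revrevu : rev v != rev (rev u). Proof. by rewrite revK eq_sym. Qed.

Let ov_max_uv x y : D x -> D y -> x != y -> x != rev y -> ov x y <= ov u v.
Proof. by move=> *; apply: ov_uv_max. Qed.

Let ov_max_vu x y : D x -> D y -> x != y -> x != rev y -> ov x y <= ov (rev v) (rev u).
Proof. by rewrite ov_rev; apply: ov_max_uv. Qed.

Lemma tour_merge_oriented (P Q R P0 Q0 R0 : seq (seq A)) (x y : seq A) :
  orient x u -> orient y v ->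
  [/\ all2 orient P P0, all2 orient Q Q0 & all2 orient R R0] ->
  {in P ++ Q ++ R, forall z, apart u v D z} ->
  exists2 X, tour_of (merge u v :: P0 ++ Q0 ++ R0) X &
    tour_ov (P ++ x :: Q ++ y :: R) <= tour_ov X + 2 * ov u v.
Proof.
move=> x_u y_v [PP0 QQ0 RR0] apartPQR.
have apartP : {in P, forall z, apart u v D z}.
  by move=> z zP; rewrite apartPQR // mem_cat zP.
have apartQ : {in Q, forall z, apart u v D z}.
  by move=> z zQ; rewrite apartPQR // !mem_cat zQ orbT.
have apartR : {in R, forall z, apart u v D z}.
  by move=> z zR; rewrite apartPQR // !mem_cat zR !orbT.
have mu_mu : orient (merge u v) (merge u v) := orient_refl _.
have rmu_mu : orient (rev (merge u v)) (merge u v) by rewrite orient_revl.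
case/orP: x_u => /eqP->; case/orP: y_v => /eqP->.
- exists (P ++ merge u v :: R ++ Q).
    exists (P0 ++ merge u v :: R0 ++ Q0).
      by apply: all2_cat; rewrite // all2_cons mu_mu all2_cat.
    by apply/permP => ?; rewrite /= !count_cat /= ?count_cat; ring.
  exact: (tour_merge_ab ov_max_uv).
- exists (P ++ merge u v :: rev_tour Q ++ R).
    exists (P0 ++ merge u v :: rev Q0 ++ R0).
      by apply: all2_cat; rewrite // all2_cons mu_mu all2_cat ?all2_orient_rev_tour.
    by apply/permP => ?; rewrite /= !count_cat /= ?count_cat count_rev; ring.
  exact: (tour_merge_arevb D_rev ov_max_uv).
- (* Read backwards, the tour visits rev v before u = rev (rev u). *)
  exists (rev_tour R ++ rev (merge u v) :: Q ++ rev_tour P).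
    exists (rev R0 ++ merge u v :: Q0 ++ rev P0).
      apply: all2_cat; first exact: all2_orient_rev_tour.
      by rewrite all2_cons rmu_mu all2_cat ?all2_orient_rev_tour.
    by apply/permP => ?; rewrite /= !count_cat /= ?count_cat !count_rev; ring.
  rewrite -tour_ov_rev_tour !(rev_tour_cat, rev_tour_cons) -!catA /=.
  rewrite rev_merge -(ov_rev u v) -{2}[Q]rev_tourK.
  apply: (tour_merge_arevb D_rev ov_max_vu Drevv Drevu revv_neq_revu revv_neq_revrevu);
    exact: in_apart_rev_tour.
- (* The tour visits rev u before rev v: the order (b, a) for (rev v, rev u). *)
  exists (P ++ R ++ Q ++ [:: rev (merge u v)]).
    exists (P0 ++ R0 ++ Q0 ++ [:: merge u v]).
      by rewrite !all2_cat // all2_cons rmu_mu.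
    by apply/permP => ?; rewrite /= !count_cat /= ?count_cat /=; ring.
  rewrite rev_merge -(ov_rev u v).
  apply: (tour_merge_ba ov_max_vu Drevv Drevu revv_neq_revu revv_neq_revrevu);
    exact: in_apart_revC.
Qed.

Section Rest.
Variables (su sv : seq A) (rest : seq (seq A)).
Hypotheses (u_su : orient u su) (v_sv : orient v sv) (uniq_S : uniq S)
  (perm_S : perm_eq S (su :: sv :: rest)).

Let uniq_rest : [/\ su != sv, su \notin rest & sv \notin rest].
Proof.
have := perm_uniq perm_S; rewrite uniq_S /= inE negb_or.
by case/esym/and3P => /andP[].
Qed.
Let suS : su \in S. Proof. by rewrite (perm_mem perm_S) mem_head. Qed.
Let svS : sv \in S. Proof. by rewrite (perm_mem perm_S) !inE eqxx orbT. Qed.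
Let su_neq_sv : su != sv. Proof. by case: uniq_rest. Qed.

Let mem_rest s : s \in rest -> [/\ s \in S, su != s & sv != s].
Proof.
move=> sR; rewrite (perm_mem perm_S) !inE sR !orbT.
case: uniq_rest => _ nsu nsv; split=> //.
  by apply: contraNneq nsu => ->.
by apply: contraNneq nsv => ->.
Qed.

Lemma rest_ninfix c z s :
  s \in rest -> orient z s -> orient c su || orient c sv -> ~~ infix c z.
Proof.
move=> /mem_rest[sS su_s sv_s] z_s /orP[c_su|c_sv].
  exact: rff_orient rff_S suS sS su_s c_su z_s.
exact: rff_orient rff_S svS sS sv_s c_sv z_s.
Qed.

Lemma apart_rest z s : s \in rest -> orient z s -> apart u v D z.
Proof.
move=> sR z_s; have rz_s : orient (rev z) s by rewrite orient_revl.
have [sS _ _] := mem_rest sR.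
apply/and5P; split; first exact: orient_tilde sS z_s.
all: by apply: rest_ninfix sR _ _; rewrite ?u_su ?v_sv ?orbT.
Qed.

Local Notation four := [:: u; v; rev u; rev v].

Let su_four : su \in four.
Proof. by case/orP: u_su => /eqP->; rewrite !inE ?revK eqxx ?orbT. Qed.

Let sv_four : sv \in four.
Proof. by case/orP: v_sv => /eqP->; rewrite !inE ?revK eqxx ?orbT. Qed.

Let rest_notin_four z : z \in rest -> z \notin four.
Proof.
move=> zR; apply/negP => z4.
suff : orient z su || orient z sv by move/(rest_ninfix zR (orient_refl z)); rewrite infix_refl.
by move: z4; rewrite !inE => /or4P[] /eqP->; rewrite ?orient_revl ?u_su ?v_sv ?orbT.
Qed.

Let merge_notin_four : merge u v \notin four.
Proof.
have nvu c : orient c su -> ~~ infix v c.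
  by apply: rff_orient rff_S svS suS _ v_sv; rewrite eq_sym.
have nuv c : orient c sv -> ~~ infix u c by apply: rff_orient rff_S suS svS _ u_su.
have nrv : ~~ infix u (rev v) by apply: nuv; rewrite orient_revl.
have nru : ~~ infix v (rev u) by apply: nvu; rewrite orient_revl.
rewrite !inE; apply/negP => /or4P[] /eqP E.
- by have := nvu _ u_su; rewrite -E infix_merge_r.
- by have := nuv _ v_sv; rewrite -E infix_merge_l.
- by move: nru; rewrite -E infix_merge_r.
- by move: nrv; rewrite -E infix_merge_l.
Qed.

Let merge_notin_rest : merge u v \notin rest.
Proof.
apply/negP => muR.
by have := rest_ninfix muR (orient_refl _) (c := u); rewrite u_su infix_merge_l => /(_ isT).
Qed.

Lemma perm_merge_rest S' : uniq S' ->
  S' =i [pred z | ((z \in S) || (z == merge u v)) && (z \notin four)] ->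
  perm_eq (merge u v :: rest) S'.
Proof.
move=> uniq_S' mem_S'; apply: uniq_perm => //.
  have := perm_uniq perm_S; rewrite uniq_S /= merge_notin_rest.
  by case/esym/and3P.
move=> z; rewrite mem_S' inE /=; apply/predU1P/andP => [[->|zR]|[]].
- by rewrite eqxx orbT merge_notin_four.
- by rewrite rest_notin_four // (perm_mem perm_S) !inE zR !orbT.
case/orP => [|/eqP]; last by left.
rewrite (perm_mem perm_S) !inE => /or3P[/eqP->|/eqP->|]; last by right.
  by move: su_four; rewrite !inE => ->.
by move: sv_four; rewrite !inE => ->.
Qed.

Lemma rff_merge_rest : rff (merge u v :: rest).
Proof.
have u_su' : orient (rev u) su by rewrite orient_revl.
have v_sv' : orient (rev v) sv by rewrite orient_revl.
move=> x y; rewrite !inE => /predU1P[->|xR] /predU1P[->|yR] nxy.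
- by rewrite eqxx in nxy.
- have y_y : orient y y := orient_refl y.
  have ry_y : orient (rev y) y by rewrite orient_revl.
  apply/andP; split; apply/negP => /(infix_trans (infix_merge_l u v)).
    by apply/negP; apply: rest_ninfix yR y_y _; rewrite u_su.
  by apply/negP; apply: rest_ninfix yR ry_y _; rewrite u_su.
- have [xS su_x sv_x] := mem_rest xR.
  have x_x : orient x x := orient_refl x.
  have rx_x : orient (rev x) x by rewrite orient_revl.
  have Dx : D x by apply: orient_tilde xS x_x.
  have ninfix_x c s : s \in S -> s != x -> orient c s -> ~~ infix x c.
    by move=> sS s_x c_s; apply: rff_orient rff_S xS sS _ x_x c_s; rewrite eq_sym.
  have ninfix_rest c z : orient z x -> orient c su || orient c sv -> c != z.
    by move=> z_x c_uv; apply/ninfix_neq/(rest_ninfix xR z_x).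
  apply/andP; split.
    apply: (ninfix_merge ov_max_uv) => //.
    + exact: ninfix_x suS su_x u_su.
    + exact: ninfix_x svS sv_x v_sv.
    + by apply: ninfix_rest x_x _; rewrite u_su.
    + by apply: ninfix_rest rx_x _; rewrite u_su.
  rewrite rev_merge; apply: (ninfix_merge ov_max_vu) => //.
  + exact: ninfix_x svS sv_x v_sv'.
  + exact: ninfix_x suS su_x u_su'.
  + by apply: ninfix_rest x_x _; rewrite v_sv' orbT.
  + by apply: ninfix_rest rx_x _; rewrite v_sv' orbT.
- by have [xS _ _] := mem_rest xR; have [yS _ _] := mem_rest yR; apply: rff_S.
Qed.

End Rest.

End GreedyStep.

Lemma greedy_step_tour (A : eqType) (S S' X : seq (seq A)) :
  uniq S -> rff S -> greedy_step S S' -> tour_of S X ->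
  [/\ uniq S', rff S' & exists2 X', tour_of S' X' &
       tour_ov X + 2 * total_length S' <= tour_ov X' + 2 * total_length S].
Proof.
move=> uniq_S rff_S [u [v [adm_uv ov_max uniq_S' mem_S']]] [S0 XS0 perm_S0].
have [/tildeP[su suS u_su] /tildeP[sv svS v_sv] u_neq_v u_neq_revv] := adm_uv.
have su_neq_sv : su != sv.
  apply: contraNneq u_neq_v => su_sv; rewrite su_sv in u_su.
  by case/orP: (orient_trans u_su v_sv) => // /eqP u_revv; rewrite u_revv eqxx in u_neq_revv.
have suS0 : su \in S0 by rewrite (perm_mem perm_S0).
have svS0 : sv \in S0 by rewrite (perm_mem perm_S0).
have [P [x [Q [y [R [P0 [Q0 [R0 [eq_tour x_su y_sv tour_PQR perm_split]]]]]]]]] :=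
  tour_split XS0 suS0 svS0 su_neq_sv.
have perm_S : perm_eq S (su :: sv :: P0 ++ Q0 ++ R0).
  by apply: perm_trans perm_split; rewrite perm_sym.
have apart_PQR : {in P ++ Q ++ R, forall z, apart u v [pred x | x \in tilde S] z}.
  case: tour_PQR => PP0 QQ0 RR0 z zPQR.
  have [s sR z_s] := all2_mem (all2_cat PP0 (all2_cat QQ0 RR0)) zPQR.
  exact: (apart_rest rff_S u_su v_sv uniq_S perm_S sR z_s).
have [X' tour_X' le_X'] := tour_merge_oriented adm_uv ov_max
  (orient_trans x_su u_su) (orient_trans y_sv v_sv) tour_PQR apart_PQR.
have perm_S' := perm_merge_rest rff_S u_su v_sv uniq_S perm_S uniq_S' mem_S'.
split=> //.
  apply: rff_sub (rff_merge_rest rff_S adm_uv ov_max u_su v_sv uniq_S perm_S) _.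
  by move=> z; rewrite (perm_mem perm_S').
exists X'; first exact: tour_of_perm perm_S' tour_X'.
rewrite -eq_tour -(total_length_merge u_su v_sv perm_S) (perm_total_length perm_S').
by rewrite mulnDr addnCA addnC leq_add2l.
Qed.

Lemma greedy_loop_tour (A : eqType) (S : seq (seq A)) w X :
  greedy_loop S w -> uniq S -> rff S -> tour_of S X ->
  tour_ov X + 2 * size w <= 2 * total_length S.
Proof.
move=> loop; elim: loop X => [w' | S1 S2 w' _ step _ IH] X uniq_S rff_S.
  case=> S0 XS0 /(perm_small_eq (isT : size [:: w'] <= 1)) S0_w; subst S0.
  rewrite total_length_cons /total_length big_nil addn0.
  by case: X XS0 => [|x [|x' X]] //=; rewrite andbF.
case/(greedy_step_tour uniq_S rff_S step) => uniq_S2 rff_S2 [X' tour_X' le_X'].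
by have := IH X' uniq_S2 rff_S2 tour_X'; lia.
Qed.

Section Occurrences.
Variable A : eqType.
Implicit Types (s t z : seq A) (S X : seq (seq A)).

Definition occurs_at t z i := (i + size t <= size z) && (take (size t) (drop i z) == t).

Lemma infix_occurs t z : infix t z -> exists i, occurs_at t z i.
Proof.
case/infixP => p [s ->]; exists (size p).
by rewrite /occurs_at drop_size_cat // take_size_cat // eqxx !size_cat andbT; lia.
Qed.

Lemma infix_take_drop n d s : infix (take n (drop d s)) s.
Proof. exact: infix_trans (prefixW (prefix_take _ _)) (suffixW (suffix_drop _ _)). Qed.

Lemma occurs_at_ov t0 t1 z m p : occurs_at t0 z m -> occurs_at t1 z p -> m <= p ->
  ~~ infix t1 t0 -> size t0 + m <= ov t0 t1 + p.
Proof.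
case/andP=> t0z /eqP E0 /andP[t1z /eqP E1] le_mp nt1t0.
case: (leqP (m + size t0) p) => lt_pend; first lia.
set d := p - m; set L := m + size t0 - p.
have Ld : size t0 = L + d by rewrite /L /d; lia.
have Dt0 : drop d t0 = take L (drop p z).
  rewrite -E0 Ld -take_drop drop_drop.
  by have -> : d + m = p by rewrite /d; lia.
case: (leqP (p + size t1) (m + size t0)) => h2.
  case/negP: nt1t0; rewrite -E1.
  have -> : take (size t1) (drop p z) = take (size t1) (drop d t0).
    by rewrite Dt0 take_takel // /L; lia.
  exact: infix_take_drop.
have hL : L <= size t1 by rewrite /L; lia.
have : size (drop d t0) <= ov t0 t1.
  apply: (@leq_size_ov _ _ _ (take d t0) _ (drop L t1)); first by rewrite cat_take_drop.
  by rewrite Dt0 -[take L (drop p z)](take_takel _ hL) E1 cat_take_drop.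
by rewrite size_drop /d /L; lia.
Qed.

End Occurrences.

Section SuperstringTour.
Variables (A : eqType) (z : seq A).
Implicit Types (s t : seq A) (S X : seq (seq A)).

Definition occurs_from q s := exists2 i, q <= i & occurs_at s z i || occurs_at (rev s) z i.

Lemma leftmost_occurrence q S : S != [::] -> {in S, forall s, occurs_from q s} ->
  exists s0 t0 m, [/\ s0 \in S, orient t0 s0, q <= m, occurs_at t0 z m &
                      {in S, forall s, occurs_from m s}].
Proof.
move=> nS occS.
have exP : exists i, (q <= i) && has (fun s => occurs_at s z i || occurs_at (rev s) z i) S.
  case: S nS occS => // s S _ /(_ s (mem_head _ _))[i qi occ_i].
  by exists i; rewrite qi /= occ_i.
case: (ex_minnP exP) => m /andP[qm /hasP[s0 s0S occ_s0]] min_m.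
exists s0, (if occurs_at s0 z m then s0 else rev s0), m; split => //.
- by case: ifP; rewrite ?orient_revl orient_refl.
- by case: ifP occ_s0 => // ->.
move=> s sS; have [i qi occ_i] := occS s sS; exists i => //.
by apply: min_m; rewrite qi; apply/hasP; exists s.
Qed.

(* Strings are listed by leftmost occurrence in z; the occurrences of consecutive
   strings intersect in an overlap, since no string is a factor of another. *)
Lemma superstring_tour_from n q S : size S = n -> S != [::] -> uniq S -> rff S ->
  {in S, forall s, occurs_from q s} ->
  exists t X p, [/\ tour_of S (t :: X), q <= p, occurs_at t z p &
                    total_length S + p <= tour_ov (t :: X) + size z].
Proof.
elim: n q S => [|n IH] q S; first by case: S.
move=> size_S nS uniq_S rff_S occS.
have [s0 [t0 [m [s0S t0_s0 qm occ_t0 occS_m]]]] := leftmost_occurrence nS occS.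
have perm_S : perm_eq (s0 :: rem s0 S) S by rewrite perm_sym perm_to_rem.
have [rem_nil|nS'] := eqVneq (rem s0 S) [::].
  exists t0, [::], m; split=> //.
    by rewrite rem_nil in perm_S; apply: tour_of_perm perm_S _; exists [:: s0]; rewrite /= ?t0_s0.
  rewrite -(perm_total_length perm_S) rem_nil total_length_cons /total_length big_nil.
  by case/andP: occ_t0; rewrite -(orient_size t0_s0) /=; lia.
have size_rem : size (rem s0 S) = n by rewrite size_rem // size_S.
have [t1 [X [p [tour_X mp occ_t1 le_X]]]] :=
  IH m (rem s0 S) size_rem nS' (rem_uniq _ uniq_S) (rff_sub rff_S (@mem_rem _ s0 S))
     (fun s sS' => occS_m s (mem_rem sS')).
exists t0, (t1 :: X), m; split=> //.
  exact: tour_of_perm perm_S (tour_of_cons tour_X t0_s0).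
have [s1 s1S' t1_s1] := tour_of_headP tour_X.
have s1_neq_s0 : s1 != s0 by apply: contraTneq s1S' => ->; rewrite mem_rem_uniqF.
have := occurs_at_ov occ_t0 occ_t1 mp
  (rff_orient rff_S (mem_rem s1S') s0S s1_neq_s0 t1_s1 t0_s0).
rewrite -(perm_total_length perm_S) total_length_cons tour_ov_cons link_ov_consr link_ov11.
by rewrite -(orient_size t0_s0); lia.
Qed.

Lemma superstring_tour S : S != [::] -> uniq S -> rff S -> rsuperstring S z ->
  exists2 X, tour_of S X & total_length S <= tour_ov X + size z.
Proof.
move=> nS uniq_S rff_S sup.
have occS : {in S, forall s, occurs_from 0 s}.
  by move=> s /sup /orP[] /infix_occurs[i occ_i]; exists i; rewrite ?occ_i ?orbT.
have [t [X [p [tour_X _ _ le_X]]]] := superstring_tour_from erefl nS uniq_S rff_S occS.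
by exists (t :: X) => //; lia.
Qed.

End SuperstringTour.

Lemma mrff_id (A : eqType) (S S' : seq (seq A)) : rff S -> mrff S S' -> S' = S.
Proof.
move=> + mr; case: mr => [// | {}S S1 S2 [x [[xS [y [yS y_neq_x infix_xy]]] _]] _] rff_S.
have x_neq_y : x != y by rewrite eq_sym.
have /andP[nxy nxry] := rff_S x y xS yS x_neq_y.
by move: infix_xy; rewrite (negbTE nxy) (negbTE nxry).
Qed.

Import GRing.Theory Num.Theory.
Local Open Scope ring_scope.

Theorem theorem2 (T : eqType) (S : seq (seq T)) (kmin : nat) (w : seq T) :
  uniq S -> S != [::] -> rff S -> is_kmin S kmin -> greedyR_output S w ->
  (1 / 2 : rat) * ((total_length S)%:R - kmin%:R)
    <= (total_length S)%:R - (size w)%:R.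
Proof.
move=> uniq_S nS rff_S [[z [sup_z <-]] _] [S0 [/(mrff_id rff_S) -> loop]].
have [X tour_X le_X] := superstring_tour nS uniq_S rff_S sup_z.
have le_loop := greedy_loop_tour loop uniq_S rff_S tour_X.
have : (2 * size w <= total_length S + size z)%N by lia.
by rewrite -(ler_nat rat) natrD natrM => le_w; lra.
Qed.
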